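(* Let $M\ge2$ and let $\mathcal{P}$ be a Class II source set on $\{1,\dots,M\}$ with $P_1\ge P_2\ge\dots\ge P_M$ for every $P\in\mathcal{P}$, and let $D^{(M-1)}=\sup_{P\in\mathcal{P}}\sum_{i=2}^{M}P_i$. Then for $D\in[0,1]$, $\epsilon^*_{\mathrm{IT}}(\mathcal{P},D)=0$ if and only if $D\ge D^{(M-1)}$.
   Context: A source set is a nonempty set $\mathcal{P}$ of probability distributions on $\{1,\dots,M\}$; Class I means its convex hull contains the uniform distribution; Class II means it is not Class I and a single permutation orders all its distributions decreasingly. A mechanism is an $M\times M$ row-stochastic matrix $Q$ with entries $Q(j|i)$; its diagonal distortions are $D_i=1-Q(i|i)$. $Q$ is $(\mathcal{P},D)$-valid if $\sum_iP_iD_i\le D$ for all $P\in\mathcal{P}$; $\mathcal{Q}(\mathcal{P},D)$ is the set of these. $I(P;Q)$ is the mutual information $I(X;\hat X)$ for $X\sim P$, $\hat X\sim Q(\cdot|X)$; $\epsilon^*_{\mathrm{IT}}(\mathcal{P},D)=\min_{Q\in\mathcal{Q}(\mathcal{P},D)}\max_{P\in\mathcal{P}}I(P;Q)$. *)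

From HB Require Import structures.
From mathcomp Require Import all_boot all_order all_algebra.
From mathcomp Require Import all_classical all_reals.
From mathcomp Require Import ereal exp.
From mathcomp Require Import perm.
Set Implicit Arguments. Unset Strict Implicit. Unset Printing Implicit Defensive.
Import Order.TTheory GRing.Theory Num.Theory.
Local Open Scope classical_set_scope.
Local Open Scope ring_scope.

(* The alphabet {1,...,M} is represented by 'I_M = {0,...,M-1}
   (symbol k+1 of the paper is index k here). *)

Definition prob_dist (R : realType) (M : nat) (p : 'I_M -> R) : Prop :=
  (forall i, 0 <= p i) /\ \sum_(i < M) p i = 1.

Definition source_set (R : realType) (M : nat) (Ps : set ('I_M -> R)) : Prop :=
  Ps !=set0 /\ Ps `<=` @prob_dist R M.

(* The uniform distribution lies in the convex hull of Ps
   (convex hull = set of finite convex combinations). *)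
Definition classI (R : realType) (M : nat) (Ps : set ('I_M -> R)) : Prop :=
  exists (n : nat) (w : 'I_n -> R) (p : 'I_n -> 'I_M -> R),
    [/\ forall k, Ps (p k), forall k, 0 <= w k, \sum_(k < n) w k = 1 &
        forall i, \sum_(k < n) w k * p k i = M%:R^-1].

Definition classII (R : realType) (M : nat) (Ps : set ('I_M -> R)) : Prop :=
  ~ classI Ps /\
  exists s : 'S_M, forall P, Ps P ->
    forall i j : 'I_M, (i <= j)%N -> P (s j) <= P (s i).

(* Mechanisms: row-stochastic matrices, Q i j = Q(j|i). *)
Definition mechanism (R : realType) (M : nat) (Q : 'M[R]_M) : Prop :=
  (forall i j, 0 <= Q i j) /\ (forall i, \sum_(j < M) Q i j = 1).

Definition distortion (R : realType) (M : nat) (Q : 'M[R]_M) (i : 'I_M) : R :=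
  1 - Q i i.

Definition valid (R : realType) (M : nat) (Ps : set ('I_M -> R)) (D : R)
  (Q : 'M[R]_M) : Prop :=
  mechanism Q /\
  forall P, Ps P -> \sum_(i < M) P i * distortion Q i <= D.

Definition out_prob (R : realType) (M : nat) (P : 'I_M -> R) (Q : 'M[R]_M)
  (j : 'I_M) : R := \sum_(k < M) P k * Q k j.

Definition mutual_info (R : realType) (M : nat) (P : 'I_M -> R) (Q : 'M[R]_M) : R :=
  \sum_(i < M) \sum_(j < M)
    (if P i * Q i j == 0 then 0
     else P i * Q i j * ln (Q i j / out_prob P Q j)).

Definition eps_IT (R : realType) (M : nat) (Ps : set ('I_M -> R)) (D : R)
  : \bar R :=
  ereal_inf [set ereal_sup [set (mutual_info P Q)%:E | P in Ps]
            | Q in valid Ps D].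

Definition D_Mminus1 (R : realType) (M : nat) (Ps : set ('I_M -> R)) : \bar R :=
  ereal_sup [set (\sum_(i < M | (0 < i)%N) P i)%:E | P in Ps].

From HB Require Import structures.
From mathcomp Require Import all_boot all_order all_algebra.
From mathcomp Require Import all_classical all_reals.
From mathcomp Require Import ereal exp.
From mathcomp Require Import perm ring lra.
Set Implicit Arguments. Unset Strict Implicit. Unset Printing Implicit Defensive.
Import Order.TTheory GRing.Theory Num.Theory.
Local Open Scope classical_set_scope.
Local Open Scope ring_scope.

(* If D >= D^(M-1), the mechanism that always outputs the most likely symbol
   has zero leakage and distortion sum_(i >= 2) P_i <= D.  Conversely, for
   every t >= 0 the mutual information is bounded below by
   t (A - B) - t^2 (A + B), where A = P(Xhat = X) and B is the same
   probability for independent X and Xhat.  Validity gives A >= 1 - D, the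
   ordering of P gives B <= P_1, so a source P with sum_(i >= 2) P_i = D + d,
   d > 0, forces I(P; Q) >= d^2 / 8 for every valid Q. *)

Lemma big_ord_gt0 (V : nmodType) n (n_gt0 : (0 < n)%N) (F : 'I_n -> V) :
  \sum_i F i = F (Ordinal n_gt0) + \sum_(i < n | (0 < i)%N) F i.
Proof.
rewrite (bigD1 (Ordinal n_gt0)) //=; congr (_ + _); apply: eq_bigl => i.
by rewrite -(inj_eq val_inj) /= lt0n.
Qed.

Section RealInequalities.
Variable R : realType.

Lemma ln_ge_1Bv (s : R) : 0 < s -> 1 - s^-1 <= ln s.
Proof.
move=> s0; have := expR_ge1Dx (ln s^-1).
by rewrite lnK ?posrE ?invr_gt0 // lnV ?posrE //; lra.
Qed.

Lemma quadratic_ge0 (s t : R) : 0 <= t ->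
  0 <= (s - 1) ^+ 2 - t * (s ^+ 2 - 1) + t ^+ 2 * (s ^+ 2 + 1).
Proof.
move=> t0; have k0 : 0 < 1 - t + t ^+ 2 by nra.
rewrite -(pmulr_rge0 _ k0).
have -> : (1 - t + t ^+ 2) * ((s - 1) ^+ 2 - t * (s ^+ 2 - 1) + t ^+ 2 * (s ^+ 2 + 1))
    = ((1 - t + t ^+ 2) * s - 1) ^+ 2 + t ^+ 2 + t ^+ 4 by ring.
by rewrite !addr_ge0 ?sqr_ge0 ?exprn_ge0.
Qed.

(* Write x = s^2 and use ln s >= 1 - 1/s; the remainder is [quadratic_ge0]. *)
Lemma mul_ln_ge (x t : R) : 0 < x -> 0 <= t ->
  (1 + t) * (x - 1) - t ^+ 2 * (x + 1) <= x * ln x.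
Proof.
move=> x0 t0; set s := Num.sqrt x.
have s0 : 0 < s by rewrite sqrtr_gt0.
have -> : x = s ^+ 2 by rewrite sqr_sqrtr // ltW.
have lnx : ln (s ^+ 2) = 2 * ln s by rewrite expr2 lnM ?posrE // mulr2n mulrDl mul1r.
have ss : s ^+ 2 * (1 - s^-1) = s ^+ 2 - s.
  by rewrite mulrBr mulr1 expr2 mulrK // unitfE gt_eqF.
have : s ^+ 2 * (1 - s^-1) <= s ^+ 2 * ln s by rewrite ler_pM2l ?exprn_gt0 ?ln_ge_1Bv.
have := quadratic_ge0 s t0; rewrite lnx ss; nra.
Qed.

Lemma mul_ln_div_ge (a b t : R) : 0 < a -> 0 < b -> 0 <= t ->
  (1 + t) * (a - b) - t ^+ 2 * (a + b) <= a * ln (a / b).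
Proof.
move=> a0 b0 t0; set x := a / b.
have x0 : 0 < x by rewrite divr_gt0.
have -> : a = b * x by rewrite /x mulrCA divff ?mulr1 // gt_eqF.
have := mul_ln_ge x0 t0; rewrite -(ler_pM2l b0); nra.
Qed.

End RealInequalities.

Section MutualInfoLowerBound.
Variables (R : realType) (M : nat) (P : 'I_M -> R) (Q : 'M[R]_M).
Hypotheses (P_dist : prob_dist P) (Q_mech : mechanism Q).

Definition agreement : R := \sum_i P i * Q i i.

Definition indep_agreement : R := \sum_i P i * out_prob P Q i.

Lemma out_prob_ge0 j : 0 <= out_prob P Q j.
Proof.
by apply: sumr_ge0 => k _; apply: mulr_ge0; [case: P_dist | case: Q_mech].
Qed.

Lemma sum_out_prob : \sum_j out_prob P Q j = 1.
Proof.
rewrite /out_prob exchange_big /=; case: P_dist => _ <-.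
by apply: eq_bigr => k _; rewrite -mulr_sumr (proj2 Q_mech) mulr1.
Qed.

Lemma joint_le_out_prob i j : P i * Q i j <= out_prob P Q j.
Proof.
rewrite /out_prob (bigD1 i) //= lerDl.
by apply: sumr_ge0 => k _; apply: mulr_ge0; [case: P_dist | case: Q_mech].
Qed.

Lemma agreement_le1 : agreement <= 1.
Proof.
have [P0 <-] := P_dist; have [Q0 Q1] := Q_mech.
apply: ler_sum => i _; rewrite -[leRHS]mulr1 ler_wpM2l // -(Q1 i) (bigD1 i) //=.
by rewrite lerDl; apply: sumr_ge0.
Qed.

Lemma indep_agreement_ge0 : 0 <= indep_agreement.
Proof. by apply: sumr_ge0 => i _; rewrite mulr_ge0 ?out_prob_ge0 //; case: P_dist. Qed.

Lemma indep_agreement_le_max p : (forall i, P i <= p) -> indep_agreement <= p.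
Proof.
move=> Pp; rewrite -[leRHS]mulr1 -sum_out_prob mulr_sumr.
by apply: ler_sum => i _; rewrite ler_wpM2r ?out_prob_ge0.
Qed.

(* Each summand a ln(a/b) of the mutual information, a = P_i Q(j|i) and
   b = P_i q_j, is bounded by [mul_ln_div_ge] with parameter t on the
   diagonal and 0 off it; the terms a - b sum to zero. *)
Lemma mutual_info_ge t : 0 <= t ->
  t * (agreement - indep_agreement) - t ^+ 2 * (agreement + indep_agreement)
  <= mutual_info P Q.
Proof.
move=> t0; have [P0 P1] := P_dist; have [Q0 Q1] := Q_mech.
pose tt (i j : 'I_M) := if i == j then t else 0.
pose g i j := (P i * Q i j - P i * out_prob P Q j)
  + (tt i j * (P i * Q i j - P i * out_prob P Q j)
     - tt i j ^+ 2 * (P i * Q i j + P i * out_prob P Q j)).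
have tt0 i j : 0 <= tt i j by rewrite /tt; case: eqP.
have g_le : \sum_i \sum_j g i j <= mutual_info P Q.
  apply: ler_sum => i _; apply: ler_sum => j _.
  have b0 : 0 <= P i * out_prob P Q j by rewrite mulr_ge0 ?out_prob_ge0.
  have [a0|a_neq0] := eqVneq (P i * Q i j) 0.
    rewrite /g a0; have := tt0 i j; nra.
  have a_gt0 : 0 < P i * Q i j by rewrite lt_def a_neq0 mulr_ge0.
  have Pi_gt0 : 0 < P i by rewrite lt_def P0 andbT; apply: contraNneq a_neq0 => ->; rewrite mul0r.
  have b_gt0 : 0 < P i * out_prob P Q j.
    by rewrite mulr_gt0 // (lt_le_trans a_gt0 (joint_le_out_prob i j)).
  have -> : Q i j / out_prob P Q j = P i * Q i j / (P i * out_prob P Q j).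
    by rewrite invfM mulrACA divff ?mul1r // gt_eqF.
  apply: le_trans _ (mul_ln_div_ge a_gt0 b_gt0 (tt0 i j)).
  by rewrite /g; lra.
apply: le_trans g_le; rewrite /g; under eq_bigr => i _ do rewrite big_split /=.
rewrite big_split /= big1 ?add0r; last first.
  by move=> i _; rewrite sumrB -!mulr_sumr Q1 sum_out_prob subrr.
have diag i (F G : 'I_M -> R) :
    \sum_j (tt i j * F j - tt i j ^+ 2 * G j) = t * F i - t ^+ 2 * G i.
  rewrite (bigD1 i) //= /tt eqxx big1 ?addr0 // => j /negbTE.
  by rewrite eq_sym => ->; rewrite expr0n !mul0r subr0.
under eq_bigr => i _ do rewrite diag.
by rewrite sumrB -!mulr_sumr -!big_split /= sumrB.
Qed.

Lemma mutual_info_ge0 : 0 <= mutual_info P Q.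
Proof. by have := mutual_info_ge (lexx 0); rewrite expr0n !mul0r subr0. Qed.

Lemma mutual_info_ge_sq d : 0 <= d -> d <= agreement - indep_agreement ->
  d ^+ 2 / 8 <= mutual_info P Q.
Proof.
move=> d0 d_le; have t0 : 0 <= d / 4 by rewrite divr_ge0.
apply: le_trans (mutual_info_ge t0).
have AB2 : agreement + indep_agreement <= 2.
  by have := agreement_le1; have := indep_agreement_ge0; lra.
have h1 : d / 4 * d <= d / 4 * (agreement - indep_agreement) by rewrite ler_wpM2l.
have h2 : (d / 4) ^+ 2 * (agreement + indep_agreement) <= (d / 4) ^+ 2 * 2.
  by rewrite ler_wpM2l ?sqr_ge0.
have -> : d ^+ 2 / 8 = d / 4 * d - (d / 4) ^+ 2 * 2 by field.
lra.
Qed.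

Lemma sum_mul_distortion : \sum_i P i * distortion Q i = 1 - agreement.
Proof.
rewrite /distortion; under eq_bigr => i _ do rewrite mulrBr mulr1.
by rewrite sumrB; case: P_dist => _ ->.
Qed.

End MutualInfoLowerBound.

Section ConstantMechanism.
Variables (R : realType) (M : nat) (k : 'I_M).

Definition const_mech : 'M[R]_M := \matrix_(i, j) (j == k)%:R.

Lemma const_mech_mechanism : mechanism const_mech.
Proof.
split=> [i j|i]; first by rewrite mxE ler0n.
under eq_bigr => j _ do rewrite mxE.
by rewrite (bigD1 k) //= eqxx big1 ?addr0 // => j /negbTE ->.
Qed.

Lemma agreement_const_mech (P : 'I_M -> R) : agreement P const_mech = P k.
Proof.
rewrite /agreement (bigD1 k) //= mxE eqxx mulr1 big1 ?addr0 //.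
by move=> i /negbTE; rewrite mxE => ->; rewrite mulr0.
Qed.

Lemma mutual_info_const_mech (P : 'I_M -> R) : prob_dist P ->
  mutual_info P const_mech = 0.
Proof.
case=> _ P1; apply: big1 => i _; apply: big1 => j _; rewrite mxE.
have [->|_] := eqVneq j k; last by rewrite mulr0 eqxx.
have -> : out_prob P const_mech k = 1.
  by rewrite -P1; apply: eq_bigr => l _; rewrite mxE eqxx mulr1.
by rewrite divr1 ln1 mulr0; case: ifP.
Qed.

End ConstantMechanism.

Arguments const_mech {R M}.

Section EpsIT.
Variables (R : realType) (M : nat) (Ps : set ('I_M -> R)) (D : R).
Hypothesis Ps_src : source_set Ps.

Lemma eps_IT_ge (c : R) P : Ps P ->
  (forall Q, valid Ps D Q -> c <= mutual_info P Q) -> (c%:E <= eps_IT Ps D)%E.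
Proof.
move=> PP c_le; apply: le_ereal_inf_tmp => _ [Q vQ <-].
apply: le_ereal_sup_tmp; exists (mutual_info P Q)%:E; first by exists P.
by rewrite lee_fin c_le.
Qed.

Lemma eps_IT_ge0 : (0 <= eps_IT Ps D)%E.
Proof.
have [[P PP] Ps_dist] := Ps_src.
apply: (eps_IT_ge PP) => Q [Q_mech _].
exact: mutual_info_ge0 (Ps_dist _ PP) Q_mech.
Qed.

Lemma eps_IT_ge_sq P p : Ps P -> (forall i, P i <= p) -> D <= 1 - p ->
  (((1 - p - D) ^+ 2 / 8)%:E <= eps_IT Ps D)%E.
Proof.
move=> PP Pp D_le; have P_dist := Ps_src.2 _ PP.
apply: (eps_IT_ge PP) => Q [Q_mech Q_valid].
apply: (mutual_info_ge_sq P_dist Q_mech); first by rewrite subr_ge0.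
have := Q_valid P PP; rewrite (sum_mul_distortion Q P_dist).
have := indep_agreement_le_max P_dist Q_mech Pp; lra.
Qed.

Lemma eps_IT_le0 Q : valid Ps D Q -> (forall P, Ps P -> mutual_info P Q <= 0) ->
  (eps_IT Ps D <= 0)%E.
Proof.
move=> vQ I_le; apply: ge_ereal_inf.
exists (ereal_sup [set (mutual_info P Q)%:E | P in Ps]); first by exists Q.
by apply: ge_ereal_sup => _ [P PP <-]; rewrite lee_fin I_le.
Qed.

End EpsIT.

Theorem lemma4 (R : realType) (M : nat) (Ps : set ('I_M -> R)) (D : R) :
  (2 <= M)%N ->
  source_set Ps ->
  classII Ps ->
  (forall P, Ps P -> forall i j : 'I_M, (i <= j)%N -> P j <= P i) ->
  0 <= D <= 1 ->
  (eps_IT Ps D = 0%E <-> (D%:E >= D_Mminus1 Ps)%E).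
Proof.
move=> M2 Ps_src _ Ps_sorted _; have [_ Ps_dist] := Ps_src.
have M0 : (0 < M)%N by apply: leq_trans M2.
pose i0 := Ordinal M0.
have tail_sum (P : 'I_M -> R) : prob_dist P -> \sum_(i < M | (0 < i)%N) P i = 1 - P i0.
  by case=> _ P1; rewrite -P1 (big_ord_gt0 M0) -/i0 addrAC subrr add0r.
split=> [eps0|D_ge].
- rewrite leNgt; apply/negP => /ereal_sup_gt[_ [P PP <-]].
  rewrite lte_fin (tail_sum P (Ps_dist _ PP)) => D_lt.
  have := eps_IT_ge_sq Ps_src PP (fun i => Ps_sorted P PP i0 i (leq0n i)) (ltW D_lt).
  rewrite eps0 lee_fin; have : 0 < (1 - P i0 - D) ^+ 2 / 8.
    by rewrite divr_gt0 ?exprn_gt0 ?subr_gt0.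
  lra.
- apply/le_anti; rewrite eps_IT_ge0 // andbT.
  apply: (eps_IT_le0 (Q := const_mech i0)) => [|P PP].
    split=> [|P PP]; first exact: const_mech_mechanism.
    rewrite (sum_mul_distortion _ (Ps_dist _ PP)) agreement_const_mech.
    rewrite -(tail_sum P (Ps_dist _ PP)) -lee_fin; apply: le_trans D_ge.
    by apply: ereal_sup_ubound; exists P.
  by rewrite (mutual_info_const_mech i0 (Ps_dist _ PP)).
Qed.
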